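(* Let $I$ be a nearly complete intersection in $R=k[x_1,\dots,x_n]$, let $h$ be a minimal monomial generator of $I$ with $\deg(h)\ge 3$, and let $K$ be the ideal generated by the remaining minimal monomial generators of $I$, so $I=K+(h)$. Then $\operatorname{pdim}(I)\le \operatorname{pdim}(K)+1$.
   Context: $k$ is a field; $\operatorname{pdim}$ denotes projective dimension of an ideal as an $R$-module. A nearly complete intersection is a squarefree monomial ideal $I$ that is not a complete intersection such that for every variable $x$ dividing some generator of $I$, the ideal $I(x=1)$ obtained by substituting $x=1$ in the generators is a complete intersection. *)

From HB Require Import structures.
From mathcomp Require Import all_boot all_order all_algebra.
From mathcomp Require Import mpoly.
Set Implicit Arguments. Unset Strict Implicit. Unset Printing Implicit Defensive.
Import GRing.Theory.
Local Open Scope ring_scope.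

Definition mdivides (n : nat) (m m' : 'X_{1..n}) : bool :=
  [forall i : 'I_n, (m i <= m' i)%N].

Definition mcoprime (n : nat) (m m' : 'X_{1..n}) : bool :=
  [forall i : 'I_n, (m i == 0%N) || (m' i == 0%N)].

Definition msquarefree (n : nat) (m : 'X_{1..n}) : bool :=
  [forall i : 'I_n, (m i <= 1)%N].

Definition mon_ideal (k : fieldType) (n : nat) (G : seq 'X_{1..n})
    (f : {mpoly k[n]}) : Prop :=
  exists c : 'X_{1..n} -> {mpoly k[n]}, f = \sum_(g <- G) c g * 'X_[g].

Definition min_gens (n : nat) (G : seq 'X_{1..n}) : seq 'X_{1..n} :=
  undup [seq m <- G | ~~ has (fun m' => (m' != m) && mdivides m' m) G].

Definition is_min_gen_set (n : nat) (G : seq 'X_{1..n}) : bool :=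
  uniq G && all (fun m => ~~ has (fun m' => (m' != m) && mdivides m' m) G) G.

(** a monomial ideal is a complete intersection: its minimal monomial
    generators form a regular sequence, i.e. are pairwise coprime *)
Definition mon_CI (n : nat) (G : seq 'X_{1..n}) : bool :=
  let M := min_gens G in
  all (fun m => all (fun m' => (m == m') || mcoprime m m') M) M.

Definition set_var1 (n : nat) (i : 'I_n) (m : 'X_{1..n}) : 'X_{1..n} :=
  [multinom (if j == i then 0%N else m j) | j < n].

Definition nearly_CI (n : nat) (G : seq 'X_{1..n}) : Prop :=
  all (@msquarefree n) G /\ ~~ mon_CI G /\
  forall i : 'I_n, has (fun g : 'X_{1..n} => (0 < g i)%N) G ->
    mon_CI (map (set_var1 i) G).

(** M (here an ideal I of R, given as a predicate) has a finite free
    resolution of length <= L: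
      0 -> R^{b L} -d(L-1)-> ... -> R^{b 1} -d 0-> R^{b 0} -g-> I -> 0
    (maps act on row vectors by right multiplication). *)
Definition free_res_le (k : fieldType) (n : nat)
    (I : {mpoly k[n]} -> Prop) (L : nat) : Prop :=
  exists (b : nat -> nat) (g : 'cV[{mpoly k[n]}]_(b 0%N))
         (d : forall i : nat, 'M[{mpoly k[n]}]_(b i.+1, b i)),
    (forall i : nat, (L < i)%N -> b i = 0%N) /\
    (forall f, I f <-> exists v : 'rV_(b 0%N), f = (v *m g) 0 0) /\
    (forall v : 'rV_(b 0%N), v *m g = 0 <-> exists w, v = w *m d 0%N) /\
    (forall (i : nat) (v : 'rV_(b i.+1)),
        v *m d i = 0 <-> exists w, v = w *m d i.+1).

(** pdim(I) <= L  (pdim = least length of a projective = free resolution) *)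
Definition pdim_le (k : fieldType) (n : nat)
    (I : {mpoly k[n]} -> Prop) (L : nat) : Prop := free_res_le I L.

From HB Require Import structures.
From mathcomp Require Import all_boot all_order all_algebra.
From mathcomp Require Import mpoly.
From Stdlib Require Import ClassicalEpsilon.
Set Implicit Arguments. Unset Strict Implicit. Unset Printing Implicit Defensive.
Import GRing.Theory.
Local Open Scope ring_scope.

(* The mapping cone of multiplication by h, R/(K : h) -> R/K,
   resolves R/I, so pdim I <= max (pdim K, pdim (K : h) + 1). Because the
   generators of K are squarefree, K : h is K with the variables of h set to 1.
   Setting a variable x to 1 in a free resolution of a monomial ideal gives a free
   resolution of the specialised ideal, since x - 1 is a nonzerodivisor modulo
   the ideal and on the free modules; hence pdim (K : h) <= pdim K. *)

Section Resolutions.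
Variable T : comNzRingType.

(* An ideal is encoded as the column space of a one-column matrix [D 0], so
   a resolution is augmented by [T^1] in position 0. *)
Definition aug_rank (b : nat -> nat) (i : nat) : nat :=
  if i is j.+1 then b j else 1%N.

Definition exact_chain (b : nat -> nat)
    (D : forall i, 'M[T]_(aug_rank b i.+1, aug_rank b i)) : Prop :=
  forall i (v : 'rV_(aug_rank b i.+1)), v *m D i = 0 <-> exists w, v = w *m D i.+1.

Definition resolution_le (I : T -> Prop) (L : nat) : Prop :=
  exists (b : nat -> nat) (D : forall i, 'M[T]_(aug_rank b i.+1, aug_rank b i)),
    [/\ forall i, (L < i)%N -> b i = 0%N,
        forall f, I f <-> exists v : 'rV_(b 0%N), f = (v *m D 0%N) 0 0
      & exact_chain D].

Lemma resolution_le_ext (I J : T -> Prop) L :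
  (forall f, I f <-> J f) -> resolution_le I L -> resolution_le J L.
Proof.
move=> eIJ [b [D [bL DI DE]]]; exists b, D; split=> // f.
by rewrite -eIJ DI.
Qed.

Lemma exact_chain_mul0 b D : @exact_chain b D -> forall i, D i.+1 *m D i = 0.
Proof.
move=> DE i; apply/row_matrixP => j; rewrite row_mul row0.
by apply/(DE i); exists (delta_mx 0 j); rewrite -rowE.
Qed.

Lemma factor_rows p q r (M : 'M[T]_(p, r)) (D : 'M[T]_(q, r)) :
  (forall j, exists w, row j M = w *m D) -> exists N, M = N *m D.
Proof.
move=> rowsM; have [f fP] := fin_all_exists rowsM.
by exists (\matrix_j f j); apply/row_matrixP => j; rewrite row_mul rowK fP.
Qed.

Lemma exact_chain_factor b D : @exact_chain b D ->
  forall i p (M : 'M_(p, aug_rank b i.+1)), M *m D i = 0 -> exists N, M = N *m D i.+1.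
Proof.
move=> DE i p M M0; apply: factor_rows => j.
by apply/(DE i); rewrite -row_mul M0 row0.
Qed.

Definition mxfactor p q r (D : 'M[T]_(q, r)) (M : 'M[T]_(p, r)) : 'M[T]_(p, q) :=
  epsilon (inhabits 0) (fun N => M = N *m D).

Lemma mxfactorK p q r (D : 'M[T]_(q, r)) (M : 'M[T]_(p, r)) :
  (exists N, M = N *m D) -> M = mxfactor D M *m D.
Proof. exact: epsilon_spec. Qed.

Lemma eq_mx11 (A B : 'M[T]_1) : A 0 0 = B 0 0 -> A = B.
Proof. by move=> eAB; rewrite [A]mx11_scalar [B]mx11_scalar eAB. Qed.

Lemma mx00_add_scalar p (v : 'rV[T]_p) (g : 'cV[T]_p) (c : 'rV[T]_1) x :
  (v *m g + c *m x%:M) 0 0 = (v *m g) 0 0 + c 0 0 * x.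
Proof. by rewrite mxE mul_mx_scalar [in RHS]mulrC [X in _ + X]mxE. Qed.

Section MappingCone.
Variables (K J I : T -> Prop) (h : T).
Hypothesis JhK : forall p, J p -> K (p * h).
Hypothesis colonJ : forall r, K (r * h) -> J r.
Hypothesis IKh : forall f, I f <-> exists a r, K a /\ f = a + r * h.
Variables (b b' : nat -> nat).
Variable D : forall i, 'M[T]_(aug_rank b i.+1, aug_rank b i).
Variable D' : forall i, 'M[T]_(aug_rank b' i.+1, aug_rank b' i).
Hypothesis DK : forall f, K f <-> exists v : 'rV_(b 0%N), f = (v *m D 0%N) 0 0.
Hypothesis D'J : forall f, J f <-> exists v : 'rV_(b' 0%N), f = (v *m D' 0%N) 0 0.
Hypotheses (DE : exact_chain D) (D'E : exact_chain D').

(* A chain map over multiplication by [h : R/J -> R/K]. *)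
Fixpoint cone_lift i : 'M[T]_(aug_rank b' i.+1, aug_rank b i.+1) :=
  match i with
  | 0 => mxfactor (D 0%N) (D' 0%N *m h%:M)
  | j.+1 => mxfactor (D j.+1) (D' j.+1 *m cone_lift j)
  end.

Lemma cone_lift0 : D' 0%N *m h%:M = cone_lift 0 *m D 0%N.
Proof.
apply: mxfactorK; apply: factor_rows => j.
have Jj : J (D' 0%N j 0) by apply/D'J; exists (delta_mx 0 j); rewrite -rowE mxE.
have [w wP] := (DK _).1 (JhK Jj); exists w; apply: eq_mx11.
by rewrite -wP mul_mx_scalar !mxE mulrC.
Qed.

Lemma cone_lift_null j : D' j.+1 *m cone_lift j *m D j = 0.
Proof.
have D'0 := exact_chain_mul0 D'E.
elim: j => [|j IH]; first by rewrite -mulmxA -cone_lift0 mulmxA D'0 mul0mx.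
rewrite -mulmxA /= -mxfactorK ?mulmxA ?D'0 ?mul0mx //.
exact: exact_chain_factor IH.
Qed.

Lemma cone_liftS j : D' j.+1 *m cone_lift j = cone_lift j.+1 *m D j.+1.
Proof. exact/mxfactorK/(exact_chain_factor DE)/cone_lift_null. Qed.

Definition cone_rank i : nat := (aug_rank b i.+1 + aug_rank b' i)%N.

Definition cone_mx i : 'M[T]_(aug_rank cone_rank i.+1, aug_rank cone_rank i) :=
  match i with
  | 0 => col_mx (D 0%N) h%:M
  | j.+1 => block_mx (D j.+1) 0 (cone_lift j) (- D' j)
  end.

Lemma cone_image f : I f <-> exists v : 'rV_(cone_rank 0), f = (v *m cone_mx 0) 0 0.
Proof.
rewrite IKh; split.
  case=> a [r [/DK [v ->] ->]]; exists (row_mx v r%:M).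
  by rewrite mul_row_col mx00_add_scalar [r%:M 0 0]mxE mulr1n.
case=> v ->; rewrite -[v]hsubmxK mul_row_col mx00_add_scalar.
exists ((lsubmx v *m D 0%N) 0 0), (rsubmx v 0 0); split=> //.
by apply/DK; exists (lsubmx v).
Qed.

Lemma cone_exact0 (v : 'rV_(cone_rank 0)) :
  v *m cone_mx 0 = 0 <-> exists w, v = w *m cone_mx 1.
Proof.
have D0 := exact_chain_mul0 DE.
split; last first.
  case=> w ->; rewrite -mulmxA mul_block_col mul0mx addr0 D0 mulNmx -cone_lift0.
  by rewrite addrN col_mx0 mulmx0.
rewrite -[v]hsubmxK mul_row_col; set v1 := lsubmx v; set v2 := rsubmx v => v0.
have v2h : v2 *m h%:M = - (v1 *m D 0%N) by apply/eqP; rewrite -addr_eq0 addrC v0.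
have Kv2h : K (v2 0 0 * h).
  by apply/DK; exists (- v1); rewrite mulNmx -v2h mul_mx_scalar [RHS]mxE mulrC.
have [y yP] := (D'J _).1 (colonJ Kv2h).
have v2E : v2 = y *m D' 0%N by apply: eq_mx11.
have : (v1 + y *m cone_lift 0) *m D 0%N = 0.
  by rewrite mulmxDl -mulmxA -cone_lift0 mulmxA -v2E.
case/DE => z zP; exists (row_mx z (- y)).
by rewrite mul_row_block mulmx0 add0r !mulNmx mulmxN opprK -v2E -zP addrK.
Qed.

Lemma cone_exactS j (v : 'rV_(cone_rank j.+1)) :
  v *m cone_mx j.+1 = 0 <-> exists w, v = w *m cone_mx j.+2.
Proof.
have [D0 D'0] := (exact_chain_mul0 DE, exact_chain_mul0 D'E).
split; last first.
  case=> w ->; rewrite -mulmxA mulmx_block !mulmx0 !mul0mx !addr0 !add0r.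
  by rewrite !D0 mulNmx mulmxN mulNmx opprK D'0 -cone_liftS addrN block_mx0 mulmx0.
rewrite -[v]hsubmxK mul_row_block mulmx0 add0r mulmxN.
set w1 := lsubmx v; set w2 := rsubmx v => v0.
case: (eq_row_mx (etrans v0 (esym (row_mx0 _ _ _ _)))) => w1D /eqP.
rewrite oppr_eq0 => /eqP /D'E [z2 z2P].
have : (w1 + z2 *m cone_lift j.+1) *m D j.+1 = 0.
  by rewrite mulmxDl -mulmxA -cone_liftS mulmxA -z2P.
case/DE => z1 z1P; exists (row_mx z1 (- z2)).
by rewrite mul_row_block mulmx0 add0r !mulNmx mulmxN opprK -z2P -z1P addrK.
Qed.

Lemma cone_exact : exact_chain cone_mx.
Proof. by case=> [|j] v; [exact: cone_exact0 | exact: cone_exactS]. Qed.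

End MappingCone.

Lemma resolution_le_cone (K J I : T -> Prop) (h : T) L :
  (forall p, J p -> K (p * h)) -> (forall r, K (r * h) -> J r) ->
  (forall f, I f <-> exists a r, K a /\ f = a + r * h) ->
  resolution_le K L -> resolution_le J L -> resolution_le I L.+1.
Proof.
move=> JhK colonJ IKh [b [D [bL DK DE]]] [b' [D' [b'L D'J D'E]]].
exists (cone_rank b b'), (cone_mx h D D'); split.
- by case=> [|i] //= ltLi; rewrite /cone_rank /= bL ?b'L // ltnW.
- exact: cone_image.
- exact: (cone_exact JhK colonJ DK D'J DE D'E).
Qed.
End Resolutions.

Lemma free_res_le_resolution (k : fieldType) n (I : {mpoly k[n]} -> Prop) L :
  free_res_le I L <-> resolution_le I L.
Proof.
split.
  case=> b [g [d [bL [gI [g0 dE]]]]].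
  exists b, (fun i => if i is j.+1 return 'M_(aug_rank b i.+1, aug_rank b i)
                      then d j else g).
  by split=> //; case.
case=> b [D [bL DI DE]]; exists b, (D 0%N), (fun j => D j.+1).
by do 2!split=> //; split=> [v | i v]; [exact: (DE 0%N) | exact: (DE i.+1)].
Qed.

Section MonomialIdeals.
Variables (k : fieldType) (n : nat).
Implicit Types (S : seq 'X_{1..n}) (f p q r : {mpoly k[n]}) (g m u : 'X_{1..n}).

Definition has_divisor S u : bool := has (fun g => (g <= u)%MM) S.

Definition mideal S f : Prop := forall u, u \in msupp f -> has_divisor S u.

Lemma mideal0 S : mideal S 0.
Proof. by move=> u; rewrite msupp0. Qed.

Lemma midealD S p q : mideal S p -> mideal S q -> mideal S (p + q).
Proof. by move=> Sp Sq u /msuppD_le; rewrite mem_cat => /orP[/Sp|/Sq]. Qed.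

Lemma midealMl S r p : mideal S p -> mideal S (r * p).
Proof.
move=> Sp u /msuppM_le /allpairsP[[m1 m2] /= [_ /Sp m2S ->]].
by apply: sub_has m2S => g /lepm_trans; apply; rewrite addmC lem_addr.
Qed.

Lemma midealZX S c u : has_divisor S u -> mideal S (c *: 'X_[u]).
Proof. by move=> Su v /msuppZ_le; rewrite msuppX mem_seq1 => /eqP ->. Qed.

Lemma midealMX S r g : g \in S -> mideal S (r * 'X_[g]).
Proof.
move=> gS u; rewrite (perm_mem (msuppMX _ _)) => /mapP[m _ ->].
by apply/hasP; exists g => //; apply: lem_addr.
Qed.

Lemma mideal_sub S S' f : {subset S <= S'} -> mideal S f -> mideal S' f.
Proof. by move=> sSS' Sf u /Sf /hasP[g /sSS' gS' gu]; apply/hasP; exists g. Qed.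

Lemma mideal_ind S (P : {mpoly k[n]} -> Prop) :
  P 0 -> (forall p q, P p -> P q -> P (p + q)) ->
  (forall c u, has_divisor S u -> P (c *: 'X_[u])) ->
  forall f, mideal S f -> P f.
Proof.
move=> P0 PD PX; elim/mpolyind => [//|c m p mp c0 IH] Sf.
have coef_p u : u != m -> (c *: 'X_[m] + p)@_u = p@_u.
  by move=> /negbTE um; rewrite mcoeffD mcoeffZ mcoeffX eq_sym um mulr0 add0r.
apply: PD; first apply/PX/Sf.
  by rewrite mcoeff_msupp mcoeffD mcoeffZ mcoeffX eqxx mulr1 (memN_msupp_eq0 mp) addr0.
apply: IH => u up; apply: Sf; rewrite mcoeff_msupp coef_p -?mcoeff_msupp //.
by apply: contraNneq mp => <-.
Qed.

Lemma mon_idealE S f : uniq S -> mon_ideal S f <-> mideal S f.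
Proof.
move=> uS; split=> [[c ->]|].
  rewrite big_seq; elim/big_rec: _ => [|g p gS Sp]; first exact: mideal0.
  by apply: midealD Sp; apply: midealMX.
elim/mideal_ind.
- by exists (fun=> 0); rewrite big1 // => g _; rewrite mul0r.
- move=> p q [c1 ->] [c2 ->]; exists (fun g => c1 g + c2 g).
  by rewrite -big_split; apply: eq_bigr => g _; rewrite mulrDl.
- move=> c u /hasP[g gS gu].
  exists (fun g' => if g' == g then c *: 'X_[u - g] else 0).
  rewrite (bigD1_seq g) //= eqxx big1 ?addr0; first by rewrite -scalerAl -mpolyXD submK.
  by move=> g' /negbTE ->; rewrite mul0r.
Qed.

Lemma mcoeffMXE p m u :
  (p * 'X_[m])@_u = if (m <= u)%MM then p@_(u - m) else 0.
Proof.
case: ifP => mu; first by rewrite -{1}(submK mu) addmC mcoeffMX.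
apply: memN_msupp_eq0; rewrite (perm_mem (msuppMX _ _)).
by apply/mapP => -[m' _ um]; move: mu; rewrite um lem_addr.
Qed.

(* [x - 1] is a nonzerodivisor modulo a monomial ideal: a monomial of [s] outside
   the ideal with least [x]-degree survives in [(x - 1) s]. *)
Lemma mideal_X1_cancel S (x : 'I_n) s : mideal S (('X_x - 1) * s) -> mideal S s.
Proof.
move=> Sxs u0 u0s; apply/negPn/negP => u0S.
pose bad j := has (fun u => (u x == j) && ~~ has_divisor S u) (msupp s).
have [|j /hasP[u us /andP[/eqP ux uS]] minj] := ex_minnP (ex_intro bad (u0 x) _).
  by apply/hasP; exists u0; rewrite ?eqxx.
have sxu : (s * 'X_x)@_u = 0.
  rewrite mcoeffMXE; case: ifP => // xu; apply: memN_msupp_eq0; apply/negP => uxs.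
  have ux0 : (0 < u x)%N by move: xu; rewrite lep1mP lt0n.
  have : bad (u x).-1.
    apply/hasP; exists (u - U_(x))%MM => //.
    rewrite mnmBE mnm1E eqxx subn1 eqxx /=.
    apply: contra uS => /hasP[g gS gu]; apply/hasP; exists g => //.
    exact: lepm_trans gu (lem_subr _ _).
  by move/minj; rewrite -ux; case: (u x) ux0 => // i _; rewrite /= ltnn.
have : u \in msupp (('X_x - 1) * s).
  by rewrite mcoeff_msupp mulrBl mul1r mcoeffB mulrC sxu sub0r oppr_eq0 -mcoeff_msupp.
by move/Sxs; apply/negP.
Qed.

End MonomialIdeals.

Definition subst1_tuple (k : fieldType) n (x : 'I_n) : n.-tuple {mpoly k[n]} :=
  [tuple (if i == x then 1 else 'X_i) | i < n].
Arguments subst1_tuple {k n} x.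

Notation subst1 x := (comp_mpoly (subst1_tuple x)).

Section SubstOne.
Variables (k : fieldType) (n : nat) (x : 'I_n).
Implicit Types (S : seq 'X_{1..n}) (p : {mpoly k[n]}) (m : 'X_{1..n}).

Lemma set_var1_id m : set_var1 x (set_var1 x m) = set_var1 x m.
Proof. by apply/mnmP => i; rewrite !mnmE; case: eqP. Qed.

Lemma set_var1_add m : (set_var1 x m + U_(x) *+ m x)%MM = m.
Proof.
apply/mnmP => i; rewrite mnmDE mulmnE mnm1E !mnmE.
by case: (eqVneq i x) => [->|ix] /=; rewrite ?eqxx ?mul1n ?add0n ?mul0n ?addn0.
Qed.

Lemma subst1X m : subst1 x ('X_[m] : {mpoly k[n]}) = 'X_[set_var1 x m].
Proof.
rewrite comp_mpolyX [RHS]mpolyXE_id; apply: eq_bigr => i _.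
by rewrite tnth_mktuple mnmE; case: eqP => _; rewrite ?expr1n.
Qed.

Lemma subst1E p : subst1 x p = \sum_(m <- msupp p) p@_m *: 'X_[set_var1 x m].
Proof. by rewrite comp_mpolyEX; apply: eq_bigr => m _; rewrite subst1X. Qed.

Lemma subst1_id p : subst1 x (subst1 x p) = subst1 x p.
Proof.
rewrite [subst1 x p]subst1E raddf_sum; apply: eq_bigr => m _.
by apply: etrans (comp_mpolyZ _ _ _) _; rewrite subst1X set_var1_id.
Qed.

Lemma subst1_X1 : subst1 x ('X_x - 1 : {mpoly k[n]}) = 0.
Proof.
rewrite comp_mpolyB comp_mpoly1 subst1X.
suff -> : set_var1 x U_(x)%MM = 0%MM by rewrite mpolyX0 subrr.
by apply/mnmP => i; rewrite !mnmE; case: eqP => // /eqP; rewrite eq_sym => /negbTE ->.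
Qed.

Lemma subst1_fix p : (forall m, m \in msupp p -> m x = 0%N) -> subst1 x p = p.
Proof.
move=> px0; rewrite subst1E [in RHS](mpolyE p); apply: eq_big_seq => m /px0 mx0.
by congr (_ *: 'X_[_]); apply/mnmP => i; rewrite mnmE; case: eqP => // ->.
Qed.

Lemma X1_neq0 : ('X_x - 1 : {mpoly k[n]}) != 0.
Proof.
apply/eqP => /(congr1 (mcoeff U_(x))).
by rewrite mcoeffB mcoeffX eqxx mcoeff1 mcoeff0 mnm1_eq0 subr0 => /eqP; rewrite oner_eq0.
Qed.

(* [(p - p(x = 1)) / (x - 1)], from [x^e - 1 = (x - 1) (1 + x + ... + x^(e-1))]. *)
Definition diff1 p : {mpoly k[n]} :=
  \sum_(m <- msupp p) p@_m *: ('X_[set_var1 x m] * \sum_(j < m x) 'X_[U_(x) *+ j]).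

Lemma geom_sumX e :
  ('X_x - 1) * \sum_(j < e) 'X_[U_(x) *+ j] = 'X_[U_(x) *+ e] - 1 :> {mpoly k[n]}.
Proof.
elim: e => [|e IH]; first by rewrite big_ord0 mulr0 mulm0n mpolyX0 subrr.
rewrite big_ord_recr /= mulrDr IH mulrBl mul1r -mpolyXD -mulmS.
by rewrite addrC addrA subrK.
Qed.

Lemma subst1_diff p : p - subst1 x p = ('X_x - 1) * diff1 p.
Proof.
rewrite subst1E {1}(mpolyE p) -sumrB /diff1 mulr_sumr; apply: eq_bigr => m _.
rewrite -scalerAr -scalerBr; congr (_ *: _).
by rewrite mulrCA geom_sumX mulrBr mulr1 -mpolyXD set_var1_add.
Qed.

Lemma diff1_deg p e : (forall m, m \in msupp p -> (m x <= e.+1)%N) ->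
  forall m, m \in msupp (diff1 p) -> (m x <= e)%N.
Proof.
move=> pe u /msupp_sum_le /flattenP[s /mapP[m]].
rewrite mem_filter /= => mp -> /msuppZ_le.
rewrite mulrC (perm_mem (msuppMX _ _)).
move=> /mapP[u' /msupp_sum_le /flattenP[s' /mapP[j _ ->]]].
rewrite msuppX mem_seq1 => /eqP -> ->.
rewrite mnmDE mulmnE mnm1E !mnmE eqxx mul1n add0n.
by rewrite -ltnS; apply: leq_trans (ltn_ord j) (pe _ mp).
Qed.

Lemma mideal_subst1 S p : mideal S p -> mideal (map (set_var1 x) S) (subst1 x p).
Proof.
move=> Sp u; rewrite subst1E => /msupp_sum_le /flattenP[s /mapP[m]].
rewrite mem_filter /= => mp -> /msuppZ_le; rewrite msuppX mem_seq1 => /eqP ->.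
have /hasP[g gS gm] := Sp _ mp; apply/hasP; exists (set_var1 x g); first exact: map_f.
by apply/mnm_lepP => i; rewrite !mnmE; case: eqP => // _; apply/mnm_lepP.
Qed.

Section Matrices.
Variables p q : nat.
Implicit Type A : 'M[{mpoly k[n]}]_(p, q).

Definition xdeg_le e A : Prop := forall i j m, m \in msupp (A i j) -> (m x <= e)%N.

Lemma xdeg_le_exists A : exists e, xdeg_le e A.
Proof.
exists (\max_(i < p) \max_(j < q) \max_(m <- msupp (A i j)) m x)%N => i j m mA.
apply: leq_trans (@leq_bigmax_seq _ _ xpredT (fun m : 'X_{1..n} => m x) m mA isT) _.
by apply: (bigmax_sup i) => //; apply: (bigmax_sup j).
Qed.

Lemma map_subst1_fix A : xdeg_le 0 A -> map_mx (subst1 x) A = A.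
Proof.
move=> A0; apply/matrixP => i j; rewrite mxE subst1_fix // => m /A0.
by rewrite leqn0 => /eqP.
Qed.

Lemma map_subst1_id A : map_mx (subst1 x) (map_mx (subst1 x) A) = map_mx (subst1 x) A.
Proof. by apply/matrixP => i j; rewrite !mxE subst1_id. Qed.

Lemma map_subst1_diff A : A - map_mx (subst1 x) A = ('X_x - 1) *: map_mx diff1 A.
Proof. by apply/matrixP => i j; rewrite !mxE subst1_diff. Qed.

Lemma scalemxX1_eq0 A : ('X_x - 1) *: A = 0 -> A = 0.
Proof. by move/eqP; rewrite scalemx_eq0 (negbTE X1_neq0) => /eqP. Qed.

Lemma xdeg_le_diff1 e A : xdeg_le e.+1 A -> xdeg_le e (map_mx diff1 A).
Proof. by move=> Ae i j m; rewrite mxE; apply: diff1_deg; apply: Ae. Qed.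

End Matrices.
End SubstOne.

Section SubstResolution.
Variables (k : fieldType) (n : nat) (x : 'I_n) (S : seq 'X_{1..n}).
Variables (b : nat -> nat) (D : forall i, 'M[{mpoly k[n]}]_(aug_rank b i.+1, aug_rank b i)).
Hypothesis DS : forall f, mideal S f <-> exists v : 'rV_(b 0%N), f = (v *m D 0%N) 0 0.
Hypothesis DE : exact_chain D.

Local Notation D1 i := (map_mx (subst1 x) (D i)).

Lemma subst1_image f :
  mideal (map (set_var1 x) S) f <-> exists v : 'rV_(b 0%N), f = (v *m D1 0%N) 0 0.
Proof.
split.
  elim/mideal_ind.
  - by exists 0; rewrite mul0mx mxE.
  - by move=> p q [v1 ->] [v2 ->]; exists (v1 + v2); rewrite mulmxDl [RHS]mxE.
  move=> c u /hasP[_ /mapP[g gS ->] gu].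
  have [w wP] : exists w : 'rV_(b 0%N), 'X_[g] = (w *m D 0%N) 0 0.
    by apply/DS; rewrite -[X in mideal _ X]mul1r; apply: midealMX.
  exists ((c *: 'X_[u - set_var1 x g]) *: map_mx (subst1 x) w).
  by rewrite -scalemxAl mxE -map_mxM mxE -wP /= subst1X -scalerAl -mpolyXD submK.
case=> v ->; rewrite mxE; elim/big_rec: _ => [|j p _ Sp]; first exact: mideal0.
apply: midealD Sp; apply: midealMl; rewrite mxE; apply: mideal_subst1; apply/DS.
by exists (delta_mx 0 j); rewrite -rowE mxE.
Qed.

(* [x - 1] is a nonzerodivisor modulo [S] in position 0, and modulo the image of
   [D j.+1], which is the kernel of [D j], in position [j.+1]. *)
Lemma image_X1_cancel i (u : 'rV_(aug_rank b i)) :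
  (exists v, ('X_x - 1) *: u = v *m D i) -> exists w, u = w *m D i.
Proof.
case: i u => [|j] u [v uv].
  have : mideal S (('X_x - 1) * u 0 0) by apply/DS; exists v; rewrite -uv mxE.
  by case/mideal_X1_cancel/DS => w wP; exists w; apply: eq_mx11.
have : u *m D j = 0.
  apply: (scalemxX1_eq0 (x := x)).
  by rewrite scalemxAl uv -mulmxA (exact_chain_mul0 DE) mulmx0.
by case/DE => w wP; exists w.
Qed.

Lemma subst1_exact_fixed i (v : 'rV_(aug_rank b i.+1)) :
  map_mx (subst1 x) v = v -> v *m D1 i = 0 -> exists w, v = w *m D1 i.+1.
Proof.
move=> vfix v0; set Dd := map_mx (diff1 x) (D i).
have vD : v *m D i = ('X_x - 1) *: (v *m Dd).
  have -> : D i = D1 i + ('X_x - 1) *: Dd by rewrite -map_subst1_diff addrC subrK.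
  by rewrite mulmxDr v0 add0r scalemxAr.
have [u uP] := image_X1_cancel (ex_intro _ v (esym vD)).
have : (v - ('X_x - 1) *: u) *m D i = 0 by rewrite mulmxBl vD -scalemxAl -uP subrr.
case/DE => w wP; exists (map_mx (subst1 x) w).
have := congr1 (map_mx (subst1 x)) wP.
by rewrite map_mxB map_mxZ /= subst1_X1 scale0r subr0 vfix map_mxM.
Qed.

Lemma subst1_exact_subst i (v : 'rV_(aug_rank b i.+1)) :
  v *m D1 i = 0 -> exists w, map_mx (subst1 x) v = w *m D1 i.+1.
Proof.
move=> v0; apply: subst1_exact_fixed; first exact: map_subst1_id.
by have := congr1 (map_mx (subst1 x)) v0; rewrite map_mxM map_mx0 map_subst1_id.
Qed.

(* Induction on the [x]-degree of [v], splitting [v = v(x = 1) + (x - 1) diff1 v]. *)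
Lemma subst1_exact : exact_chain (fun i => D1 i).
Proof.
have D10 i : D1 i.+1 *m D1 i = 0 by rewrite -map_mxM (exact_chain_mul0 DE) map_mx0.
move=> i v; split; last by case=> w ->; rewrite -mulmxA D10 mulmx0.
have [e] := xdeg_le_exists x v; elim: e v => [|e IH] v ve v0;
  have [w1 w1P] := subst1_exact_subst v0.
  by exists w1; rewrite -w1P map_subst1_fix.
have [|w2 w2P] := IH _ (xdeg_le_diff1 ve).
  apply: (scalemxX1_eq0 (x := x)); rewrite scalemxAl -map_subst1_diff.
  by rewrite mulmxBl v0 w1P -mulmxA D10 mulmx0 subrr.
exists (w1 + ('X_x - 1) *: w2).
by rewrite mulmxDl -scalemxAl -w1P -w2P -map_subst1_diff addrC subrK.
Qed.

End SubstResolution.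

Lemma resolution_le_subst1 (k : fieldType) n (x : 'I_n) (S : seq 'X_{1..n}) L :
  resolution_le (mideal (k := k) S) L ->
  resolution_le (mideal (k := k) (map (set_var1 x) S)) L.
Proof.
case=> b [D [bL DS DE]]; exists b, (fun i => map_mx (subst1 x) (D i)); split=> //.
- exact: (subst1_image x DS).
- exact: (subst1_exact x DS DE).
Qed.

Definition set_vars1 n (xs : seq 'I_n) (m : 'X_{1..n}) : 'X_{1..n} :=
  [multinom (if i \in xs then 0%N else m i) | i < n].

Lemma set_vars1_nil n (m : 'X_{1..n}) : set_vars1 [::] m = m.
Proof. by apply/mnmP => i; rewrite mnmE. Qed.

Lemma set_vars1_cons n x xs (m : 'X_{1..n}) :
  set_vars1 (x :: xs) m = set_var1 x (set_vars1 xs m).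
Proof. by apply/mnmP => i; rewrite !mnmE in_cons; case: eqP. Qed.

Lemma resolution_le_set_vars1 (k : fieldType) n xs (S : seq 'X_{1..n}) L :
  resolution_le (mideal (k := k) S) L ->
  resolution_le (mideal (k := k) (map (set_vars1 xs) S)) L.
Proof.
move=> SL; elim: xs => [|x xs IH]; first by rewrite (eq_map (@set_vars1_nil n)) map_id.
by rewrite (eq_map (set_vars1_cons x xs)) map_comp; apply: resolution_le_subst1.
Qed.

Definition mvars n (m : 'X_{1..n}) : seq 'I_n := [seq i <- enum 'I_n | (0 < m i)%N].

Lemma mem_mvars n (m : 'X_{1..n}) i : (i \in mvars m) = (0 < m i)%N.
Proof. by rewrite mem_filter mem_enum andbT. Qed.

Section Colon.
Variables (k : fieldType) (n : nat) (S : seq 'X_{1..n}) (h : 'X_{1..n}).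
Implicit Types (p r : {mpoly k[n]}).

Lemma mideal_colon r : mideal S (r * 'X_[h]) -> mideal (map (set_vars1 (mvars h)) S) r.
Proof.
move=> Srh u ur; have : (h + u)%MM \in msupp (r * 'X_[h]).
  by rewrite mcoeff_msupp mcoeffMX -mcoeff_msupp.
case/Srh/hasP => g gS gu; apply/hasP; exists (set_vars1 (mvars h) g); first exact: map_f.
apply/mnm_lepP => i; rewrite mnmE mem_mvars lt0n.
case: (eqVneq (h i) 0%N) => //= hi0.
by move/mnm_lepP: gu => /(_ i); rewrite mnmDE hi0.
Qed.

(* Squarefreeness of [S] is what makes [S : h] equal to [S] with the variables of
   [h] set to 1. *)
Lemma mideal_mul_colon p : all (@msquarefree n) S ->
  mideal (map (set_vars1 (mvars h)) S) p -> mideal S (p * 'X_[h]).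
Proof.
move=> sqfS Sp u; rewrite (perm_mem (msuppMX _ _)).
move=> /mapP[u' /Sp/hasP[_ /mapP[g gS ->]] gu' ->].
apply/hasP; exists g => //; apply/mnm_lepP => i; rewrite mnmDE.
move/mnm_lepP: gu' => /(_ i); rewrite mnmE mem_mvars; case: ifP => hi gi.
  have /forallP/(_ i) gi1 := allP sqfS g gS.
  by apply: leq_trans gi1 (leq_trans hi (leq_addr _ _)).
by apply: leq_trans gi (leq_addl _ _).
Qed.

Lemma mideal_split f : h \in S ->
  mideal S f <-> exists a r, mideal [seq g <- S | g != h] a /\ f = a + r * 'X_[h].
Proof.
move=> hS; split; last first.
  case=> a [r [Ka ->]]; apply: midealD; last exact: midealMX.
  by apply: mideal_sub Ka => g; rewrite mem_filter => /andP[].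
elim/mideal_ind.
- by exists 0, 0; split; [exact: mideal0 | rewrite mul0r addr0].
- move=> p q [a1 [r1 [Ka1 ->]]] [a2 [r2 [Ka2 ->]]].
  exists (a1 + a2), (r1 + r2); split; first exact: midealD.
  by rewrite mulrDl addrACA.
move=> c u /hasP[g gS gu]; case: (eqVneq g h) => [gh|ngh].
  exists 0, (c *: 'X_[u - h]); split; first exact: mideal0.
  by rewrite add0r -scalerAl -mpolyXD submK // -gh.
exists (c *: 'X_[u]), 0; split; last by rewrite mul0r addr0.
by apply: midealZX; apply/hasP; exists g; rewrite // mem_filter ngh.
Qed.

End Colon.

Theorem theorem4p6 (k : fieldType) (n : nat) (G : seq 'X_{1..n})
    (h : 'X_{1..n}) :
  is_min_gen_set G ->
  nearly_CI G ->
  h \in G ->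
  (3 <= mdeg h)%N ->
  forall L : nat,
    pdim_le (mon_ideal (k := k) [seq g <- G | g != h]) L ->
    pdim_le (mon_ideal (k := k) G) L.+1.
Proof.
move=> /andP[uniqG _] [sqfG _] hG _ L /free_res_le_resolution resK.
set K := [seq g <- G | g != h] in resK *.
have sqfK : all (@msquarefree n) K.
  by apply/allP => g; rewrite mem_filter => /andP[_ /(allP sqfG)].
have {}resK : resolution_le (mideal (k := k) K) L.
  by apply: resolution_le_ext resK => f; apply: mon_idealE; apply: filter_uniq.
apply/free_res_le_resolution; apply: (@resolution_le_ext _ (mideal G)).
  by move=> f; rewrite mon_idealE.
have resJ := resolution_le_set_vars1 (mvars h) resK.
apply: (resolution_le_cone (h := 'X_[h]) _ _ _ resK resJ).
- by move=> p; apply: mideal_mul_colon sqfK.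
- exact: mideal_colon.
- by move=> f; apply: mideal_split.
Qed.
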